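(* Let $G=(V,E)$ be a finite unweighted undirected graph with no isolated nodes, let $g\ge 2$ be an integer and $Q\ge 1$. Suppose $S_1,\dots,S_Q\subset V$ are pairwise disjoint $g$-dangling sets, and let $S_0=V\setminus\bigcup_{l=1}^Q S_l$ satisfy $\mathrm{vol}(S_0,G)\ge 4g^2$. Then the normalized Laplacian $L=I-D^{-1/2}AD^{-1/2}$ of $G$ has at least $Q/2$ eigenvalues (counted with multiplicity) that are strictly smaller than $(g-1)^{-1}$.
   Context: $A$ is the adjacency matrix of $G$ ($A_{ij}=1$ if $\{i,j\}\in E$, else $0$), $d_i=\sum_j A_{ij}$ is the degree of node $i$, $D=\mathrm{diag}(d_1,\dots,d_N)$, and for $S\subset V$, $\mathrm{vol}(S,G)=\sum_{i\in S}d_i$. A subset $S\subset V$ is called $g$-dangling if: (i) $|S|=g$; (ii) the node-induced subgraph on $S$ has exactly $g-1$ edges and contains no cycle (i.e., it is a tree); (iii) there is exactly one edge of $G$ with one endpoint in $S$ and the other in $V\setminus S$. *)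

From HB Require Import structures.
From mathcomp Require Import all_boot all_order all_algebra.
Set Implicit Arguments. Unset Strict Implicit. Unset Printing Implicit Defensive.
Import Order.TTheory GRing.Theory Num.Theory.

Definition simple_graph (n : nat) (e : rel 'I_n) : Prop :=
  symmetric e /\ irreflexive e.

Definition no_isolated (n : nat) (e : rel 'I_n) : Prop :=
  forall i : 'I_n, exists j : 'I_n, e i j.

Definition deg (n : nat) (e : rel 'I_n) (i : 'I_n) : nat := #|[set j | e i j]|.

Definition vol (n : nat) (e : rel 'I_n) (S : {set 'I_n}) : nat :=
  \sum_(i in S) deg e i.

Definition induced_edges (n : nat) (e : rel 'I_n) (S : {set 'I_n}) : nat :=
  #|[set p : 'I_n * 'I_n | [&& p.1 \in S, p.2 \in S, (p.1 < p.2)%N & e p.1 p.2]]|.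

Definition induced_acyclic (n : nat) (e : rel 'I_n) (S : {set 'I_n}) : Prop :=
  forall c : seq 'I_n, {subset c <= S} -> uniq c -> (2 < size c)%N -> ~~ cycle e c.

Definition boundary_edges (n : nat) (e : rel 'I_n) (S : {set 'I_n}) : nat :=
  #|[set p : 'I_n * 'I_n | [&& p.1 \in S, p.2 \notin S & e p.1 p.2]]|.

Definition dangling (n : nat) (e : rel 'I_n) (g : nat) (S : {set 'I_n}) : Prop :=
  [/\ #|S| = g, induced_edges e S = g.-1, induced_acyclic e S
    & boundary_edges e S = 1%N].

Local Open Scope ring_scope.

Definition adjacency (R : nzRingType) (n : nat) (e : rel 'I_n) : 'M[R]_n :=
  \matrix_(i, j) (e i j)%:R.

Definition deg_inv_sqrt (R : rcfType) (n : nat) (e : rel 'I_n) : 'M[R]_n :=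
  diag_mx (\row_i (Num.sqrt (deg e i)%:R)^-1).

Definition norm_laplacian (R : rcfType) (n : nat) (e : rel 'I_n) : 'M[R]_n :=
  1%:M - deg_inv_sqrt R e *m adjacency R e *m deg_inv_sqrt R e.

From mathcomp Require Import all_boot all_order all_algebra.
From mathcomp Require Import complex zify ring.
Set Implicit Arguments. Unset Strict Implicit. Unset Printing Implicit Defensive.
Import Order.TTheory GRing.Theory Num.Theory.

(* For a in C^Q put f = sum_l a_l 1_{S_l} and
   x = D^{1/2} f; these vectors form a Q-dimensional space.  Each S_l spans a
   tree with a single outgoing edge (r_l, u_l), so vol(S_l) = 2g - 1 and
   x x^* = (2g - 1) sum_l |a_l|^2.  In x L x^* = sum_i f_i sum_{j ~ i} (f_i - f_j)^*
   only the outgoing edges survive, leaving sum_l a_l (a_l - f(u_l))^*; no two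
   u_l lie in the same block, so by AM-GM this is at most 2 sum_l |a_l|^2.  The
   Rayleigh quotient is thus at most 2/(2g - 1) < 1/(g - 1) on a Q-dimensional
   space, and by min-max L has at least Q such eigenvalues. *)

Section Graph.
Variables (n : nat) (e : rel 'I_n).
Hypotheses (e_sym : symmetric e) (e_irr : irreflexive e).
Implicit Types S : {set 'I_n}.

Lemma card_pairs (P : rel 'I_n) :
  #|[set p : 'I_n * 'I_n | P p.1 p.2]| = \sum_i \sum_j P i j.
Proof.
rewrite -sum1_card big_mkcond /= (pair_big xpredT xpredT (fun i j => P i j : nat)).
by apply: eq_bigr => p _; rewrite inE; case: (P _ _).
Qed.

Lemma deg_sum i : deg e i = \sum_j e i j.
Proof.
rewrite /deg -sum1_card big_mkcond /=.
by apply: eq_bigr => j _; rewrite inE; case: (e _ _).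
Qed.

(* Every induced edge is counted from both of its ends. *)
Lemma vol_edges S : vol e S = 2 * induced_edges e S + boundary_edges e S.
Proof.
pose inside (lt : rel nat) (i j : 'I_n) := [&& i \in S, j \in S, lt i j & e i j].
have inside_edges : \sum_i \sum_j inside ltn i j = induced_edges e S.
  by rewrite /induced_edges (card_pairs (inside ltn)).
have inside_sym : \sum_i \sum_j inside (fun x y => y < x) i j = induced_edges e S.
  rewrite -inside_edges exchange_big; apply: eq_bigr => i _; apply: eq_bigr => j _.
  by rewrite /inside e_sym andbCA.
rewrite mul2n -addnn -{1}inside_edges -inside_sym /boundary_edges.
rewrite (card_pairs (fun i j => [&& i \in S, j \notin S & e i j])).
rewrite /vol big_mkcond -!big_split /=; apply: eq_bigr => i _.
rewrite deg_sum -!big_split /=; have [iS | iNS] := boolP (i \in S); last first.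
  by rewrite big1 // => j _; rewrite /inside (negbTE iNS).
apply: eq_bigr => j _; rewrite /inside iS /=.
have [jS | jNS] := boolP (j \in S); rewrite /= ?addn0 ?add0n //.
by case: ltngtP => [||/val_inj ->]; rewrite ?addn0 ?add0n ?e_irr.
Qed.

Lemma vol_dangling g S : dangling e g S -> vol e S = (2 * g.-1).+1.
Proof. by case=> _ edgesS _ bdS; rewrite vol_edges edgesS bdS addn1. Qed.

Definition boundary S : {set 'I_n * 'I_n} :=
  [set p | [&& p.1 \in S, p.2 \notin S & e p.1 p.2]].

End Graph.

Section DanglingFamily.
Variables (n : nat) (e : rel 'I_n) (g Q : nat) (S : 'I_Q -> {set 'I_n}).
Hypothesis e_sym : symmetric e.
Hypothesis S_dangling : forall l, dangling e g (S l).
Hypothesis S_disjoint : forall l l', l != l' -> [disjoint S l & S l'].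

Lemma mem_S_inj i l l' : i \in S l -> i \in S l' -> l = l'.
Proof.
move=> il il'; apply/eqP; apply: contraTT il' => /S_disjoint/disjointFr dis.
by rewrite dis.
Qed.

Lemma mem_S_eq i l : i \in S l -> forall m, (i \in S m) = (m == l).
Proof. by move=> il m; apply/idP/eqP => [im | ->]; first exact: mem_S_inj im il. Qed.

Lemma boundary_nonempty l : exists p, p \in boundary e (S l).
Proof.
have [_ _ _] := S_dangling l; rewrite /boundary_edges => bd.
by apply/set0Pn; rewrite -card_gt0 /boundary bd.
Qed.

Definition out_edge l := xchoose (boundary_nonempty l).
Definition out_src l := (out_edge l).1.
Definition out_dst l := (out_edge l).2.

Lemma out_edgeP l :
  [/\ out_src l \in S l, out_dst l \notin S l & e (out_src l) (out_dst l)].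
Proof. by have := xchooseP (boundary_nonempty l); rewrite inE => /and3P. Qed.

Lemma out_edge_uniq l i j : i \in S l -> j \notin S l -> e i j ->
  i = out_src l /\ j = out_dst l.
Proof.
move=> il jl eij; have [_ _ _ /eqP] := S_dangling l.
rewrite eqn_leq => /andP [/card_le1_eqP bd_le1 _].
have ijB : (i, j) \in boundary e (S l) by rewrite inE il jl.
have out_ij : out_edge l = (i, j) := bd_le1 _ _ ijB (xchooseP (boundary_nonempty l)).
by rewrite /out_src /out_dst out_ij.
Qed.

Lemma out_dst_inj l l' m : out_dst l \in S m -> out_dst l' \in S m -> l = l'.
Proof.
have src_dst k : out_dst k \in S m -> out_src k = out_dst m.
  move=> km; have [rk xk erk] := out_edgeP k.
  have rkm : out_src k \notin S m.
    by apply: contraNN xk => rkm; rewrite {2}(mem_S_inj rk rkm).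
  have ekr : e (out_dst k) (out_src k) by rewrite e_sym.
  by have [_ ->] := out_edge_uniq km rkm ekr.
move=> lm l'm; have [rl _ _] := out_edgeP l; have [rl' _ _] := out_edgeP l'.
by apply: (mem_S_inj rl); rewrite (src_dst _ lm) -(src_dst _ l'm).
Qed.

End DanglingFamily.

Local Open Scope sesquilinear_scope.
Local Open Scope ring_scope.

Lemma count_enum_card (T : finType) (a : pred T) : count a (enum T) = #|a|.
Proof. by rewrite -sum1_count -sum1_card big_enum_cond. Qed.

Lemma char_poly_conj (F : fieldType) n (P M : 'M[F]_n) : P \in unitmx ->
  char_poly (invmx P *m M *m P) = char_poly M.
Proof.
move=> Pu; rewrite /char_poly /char_poly_mx.
have -> : 'X%:M - map_mx polyC (invmx P *m M *m P) =
    map_mx polyC (invmx P) *m ('X%:M - map_mx polyC M) *m map_mx polyC P.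
  rewrite mulmxBr mulmxBl !map_mxM; congr (_ - _).
  by rewrite mul_mx_scalar -scalemxAl -map_mxM mulVmx // map_mx1 scalemx1.
rewrite !det_mulmx mulrC mulrA -det_mulmx -map_mxM mulmxV // map_mx1 det1.
exact: mul1r.
Qed.

Section Spectral.
Variables (C : numClosedFieldType) (n : nat).
Implicit Types (M P : 'M[C]_n) (v w : 'rV[C]_n).

Lemma hermitian_char_poly M : M \is hermsymmx ->
  char_poly M = \prod_(i < n) ('X - (spectral_diag M 0 i)%:P).
Proof.
move=> /hermitian_normalmx/orthomx_spectralP {1}->.
rewrite char_poly_conj ?spectral_unit // char_poly_trig ?diag_mx_is_trig //.
by apply: eq_bigr => i _; rewrite mxE eqxx mulr1n.
Qed.

Lemma dotmx_sum w : (w *m w^t*) 0 0 = \sum_i `|w 0 i| ^+ 2.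
Proof. by rewrite mxE; apply: eq_bigr => i _; rewrite !mxE normCK. Qed.

Lemma diag_form w (d : 'rV[C]_n) :
  (w *m diag_mx d *m w^t*) 0 0 = \sum_i d 0 i * `|w 0 i| ^+ 2.
Proof.
rewrite mul_mx_diag mxE; apply: eq_bigr => i _.
by rewrite !mxE normCK mulrCA mulrA.
Qed.

Lemma unitary_dotmx P v : P \is unitarymx ->
  (v *m v^t*) 0 0 = \sum_i `|(v *m P^t*) 0 i| ^+ 2.
Proof.
move=> Pu; set w := v *m P^t*; have -> : v = w *m P by rewrite /w (mulmxKtV _ Pu).
by rewrite -dotmx_sum trmx_mul map_mxM mulmxA mulmxtVK.
Qed.

Lemma unitary_form P (d : 'rV[C]_n) v : P \is unitarymx ->
  (v *m (P^t* *m diag_mx d *m P) *m v^t*) 0 0 =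
  \sum_i d 0 i * `|(v *m P^t*) 0 i| ^+ 2.
Proof.
move=> Pu; rewrite -diag_form; set w := v *m P^t*.
have -> : v = w *m P by rewrite /w mulmxKtV.
by rewrite trmx_mul map_mxM !mulmxA mulmxtVK // (mulmxtVK _ Pu).
Qed.

Lemma normal_form M v : M \is normalmx ->
  (v *m M *m v^t*) 0 0 =
  \sum_i spectral_diag M 0 i * `|(v *m (spectralmx M)^t*) 0 i| ^+ 2.
Proof.
move=> /orthomx_spectralP MP; rewrite [in LHS]MP.
by rewrite invmx_unitary ?unitary_form ?spectral_unitarymx.
Qed.

(* [C] is only partially ordered, so "the Rayleigh quotient of every nonzero
   a *m W is below lam" is phrased as the failure of the reverse inequality. *)
Lemma spectral_count_lt k M (W : 'M[C]_(k, n)) (lam : C) :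
  M \is hermsymmx -> lam \is Num.real ->
  (forall a : 'rV[C]_k, a != 0 ->
     ~ lam * ((a *m W) *m (a *m W)^t*) 0 0 <= ((a *m W) *m M *m (a *m W)^t*) 0 0) ->
  (k <= #|[set i : 'I_n | (spectral_diag M 0 i < lam)%R]|)%N.
Proof.
move=> Mh lamR Wlam; set d := spectral_diag M; set P := spectralmx M.
set A := [set i : 'I_n | d 0 i < lam]; rewrite leqNgt; apply/negP => ltAk.
pose B := colsub (enum_val : 'I_#|A| -> 'I_n) (W *m P^t*).
have /rowV0Pn [a /sub_kermxP aB an0] : kermx B != 0.
  by rewrite -mxrank_eq0 mxrank_ker subn_eq0 -ltnNge (leq_ltn_trans (rank_leq_col B)).
apply: (Wlam a an0).
have wA (i : 'I_n) : i \in A -> (a *m W *m P^t*) 0 i = 0.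
  move=> iA; have /matrixP/(_ 0 (enum_rank_in iA i)) := aB.
  by rewrite mulmx_colsub mulmxA !mxE enum_rankK_in.
have dR : d \is a realmx := hermitian_spectral_diag_real Mh.
rewrite (unitary_dotmx _ (spectral_unitarymx M)) normal_form ?hermitian_normalmx //.
rewrite mulr_sumr; apply: ler_sum => i _.
have [iA | iNA] := boolP (i \in A); first by rewrite wA // normr0 expr0n !mulr0.
rewrite ler_wpM2r ?exprn_ge0 ?normr_ge0 // real_leNgt ?(mxOverP dR) //.
by rewrite inE in iNA.
Qed.

End Spectral.

(* The spectral theorem is only available over a closed field, so real matrices
   are diagonalised in [R[i]]. *)
Lemma real_hermitian_char_poly (R : rcfType) n (M : 'M[R]_n) :
  map_mx (real_complex R) M \is hermsymmx ->
  char_poly M =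
  \prod_(i < n) ('X - (complex.Re (spectral_diag (map_mx (real_complex R) M) 0 i))%:P).
Proof.
move=> Mh; apply: (@map_poly_inj _ _ (real_complex R)).
rewrite map_char_poly hermitian_char_poly // rmorph_prod; apply: eq_bigr => i _.
rewrite rmorphB /= map_polyX map_polyC /= RRe_real //.
exact: (mxOverP (hermitian_spectral_diag_real Mh)).
Qed.

Lemma two_lt_dangling_ratio (F : numFieldType) g : (2 <= g)%N ->
  2%:R < (g.-1)%:R^-1 * ((2 * g.-1).+1)%:R :> F.
Proof.
by case: g => [|[|m]] //= _; rewrite ltr_pdivlMl ?ltr0n // -!natrM ltr_nat; lia.
Qed.

Section LaplacianForm.
Variables (R : rcfType) (n : nat) (e : rel 'I_n).
Hypotheses (e_sym : symmetric e) (e_irr : irreflexive e) (e_noiso : no_isolated e).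
Local Notation C := R[i].
Local Notation L := (map_mx (real_complex R) (norm_laplacian R e)).

Definition sqrt_deg i : C := real_complex R (Num.sqrt (deg e i)%:R).

Lemma sqrt_deg_conj i : (sqrt_deg i)^* = sqrt_deg i.
Proof. by apply/CrealP/complex_realP; exists (Num.sqrt (deg e i)%:R). Qed.

Lemma sqrt_degK i : sqrt_deg i * sqrt_deg i = (deg e i)%:R.
Proof. by rewrite -rmorphM -expr2 sqr_sqrtr ?ler0n // rmorph_nat. Qed.

Lemma sqrt_deg_neq0 i : sqrt_deg i != 0.
Proof.
have [j eij] := e_noiso i.
have deg_gt0 : (0 < deg e i)%N by rewrite card_gt0; apply/set0Pn; exists j; rewrite inE.
by rewrite fmorph_eq0 sqrtr_eq0 -ltNge ltr0n.
Qed.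

Lemma norm_laplacian_entry i j : norm_laplacian R e i j =
  (i == j)%:R - (Num.sqrt (deg e i)%:R)^-1 * (e i j)%:R * (Num.sqrt (deg e j)%:R)^-1.
Proof.
by rewrite /norm_laplacian /deg_inv_sqrt /adjacency mul_diag_mx mul_mx_diag !mxE.
Qed.

Lemma laplacian_entry i j :
  L i j = (i == j)%:R - (sqrt_deg i)^-1 * (e i j)%:R * (sqrt_deg j)^-1.
Proof.
by rewrite mxE norm_laplacian_entry rmorphB /= !rmorphM /= !fmorphV /= !rmorph_nat.
Qed.

Lemma laplacian_hermitian : L \is hermsymmx.
Proof.
apply: realsym_hermsym; last first.
  by apply/mxOverP => i j; rewrite mxE; apply/complex_realP; eexists.
apply/is_hermitianmxP; rewrite expr0 scale1r; apply/matrixP => i j.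
rewrite [LHS]mxE [RHS]mxE /= [RHS]mxE [RHS]mxE !norm_laplacian_entry.
by rewrite eq_sym e_sym; congr (real_complex _ (_ - _)); ring.
Qed.

Definition deg_scaled (f : 'I_n -> C) : 'rV[C]_n := \row_i (f i * sqrt_deg i).

Lemma deg_scaled_dotmx f :
  (deg_scaled f *m (deg_scaled f)^t*) 0 0 = \sum_i `|f i| ^+ 2 * (deg e i)%:R.
Proof.
rewrite mxE; apply: eq_bigr => i _; rewrite !mxE rmorphM /= sqrt_deg_conj normCK.
by rewrite -sqrt_degK; ring.
Qed.

Lemma laplacian_form f :
  (deg_scaled f *m L *m (deg_scaled f)^t*) 0 0 =
  \sum_i f i * \sum_j (e i j)%:R * ((f i)^* - (f j)^*).
Proof.
rewrite mxE; under eq_bigr do rewrite [(_ *m _) 0 _]mxE mulr_suml.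
rewrite exchange_big /=; apply: eq_bigr => i _.
transitivity (\sum_j ((i == j)%:R * (f i * (f i)^* * (deg e i)%:R)
                     - (e i j)%:R * (f i * (f j)^*))).
  apply: eq_bigr => j _; rewrite laplacian_entry !mxE rmorphM /= sqrt_deg_conj.
  have [<-|ij] := eqVneq i j.
    by rewrite e_irr -sqrt_degK; field; exact: sqrt_deg_neq0.
  by rewrite !mulr0n; field; rewrite !sqrt_deg_neq0.
rewrite sumrB mulr_sumr.
transitivity (\sum_j (e i j)%:R * (f i * (f i)^*) -
              \sum_j (e i j)%:R * (f i * (f j)^*)); last first.
  by rewrite -sumrB; apply: eq_bigr => j _; ring.
congr (_ - _); rewrite (bigD1 i) //= eqxx mul1r big1 ?addr0; last first.
  by move=> j; rewrite eq_sym => /negPf ->; rewrite mul0r.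
by rewrite deg_sum natr_sum mulr_sumr; apply: eq_bigr => j _; rewrite mulrC.
Qed.

Section DanglingRayleigh.
Variables (g Q : nat) (S : 'I_Q -> {set 'I_n}).
Hypothesis g_ge2 : (2 <= g)%N.
Hypothesis S_dangling : forall l, dangling e g (S l).
Hypothesis S_disjoint : forall l l', l != l' -> [disjoint S l & S l'].
Local Notation mem_S_eq := (mem_S_eq S_disjoint).
Local Notation out_dst := (out_dst S_dangling).
Implicit Type a : 'rV[C]_Q.

Definition block_step (a : 'rV[C]_Q) i : C := \sum_l a 0 l * (i \in S l)%:R.

Definition block_test : 'M[C]_(Q, n) :=
  \matrix_(l, i) ((i \in S l)%:R * sqrt_deg i).

Lemma mul_block_test a : a *m block_test = deg_scaled (block_step a).
Proof.
apply/rowP => i; rewrite !mxE mulr_suml; apply: eq_bigr => l _.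
by rewrite mxE mulrA.
Qed.

Lemma block_step_in a i l : i \in S l -> block_step a i = a 0 l.
Proof.
move=> il; rewrite /block_step (bigD1 l) //= il mulr1 big1 ?addr0 // => m.
by rewrite (mem_S_eq il) => /negPf ->; rewrite mulr0.
Qed.

Lemma sum_block_step a (K : 'I_n -> C) :
  \sum_i block_step a i * K i = \sum_l a 0 l * \sum_(i in S l) K i.
Proof.
under eq_bigr do rewrite mulr_suml.
rewrite exchange_big /=; apply: eq_bigr => l _.
rewrite mulr_sumr [RHS]big_mkcond /=; apply: eq_bigr => i _.
by case: (i \in S l); rewrite ?mulr1 ?mulr0 ?mul0r.
Qed.

Lemma sqr_norm_block_step a i :
  `|block_step a i| ^+ 2 = \sum_l (i \in S l)%:R * `|a 0 l| ^+ 2.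
Proof.
have [/existsP [l il] | /existsPn iNS] := boolP [exists l, i \in S l].
  rewrite (block_step_in a il) (bigD1 l) //= il mul1r big1 ?addr0 // => m.
  by rewrite (mem_S_eq il) => /negPf ->; rewrite mul0r.
rewrite big1 => [|l _]; last by rewrite (negPf (iNS l)) mul0r.
rewrite /block_step big1 ?normr0 ?expr0n // => l _.
by rewrite (negPf (iNS l)) mulr0.
Qed.

Lemma block_dotmx a :
  ((a *m block_test) *m (a *m block_test)^t*) 0 0 =
  ((2 * g.-1).+1)%:R * \sum_l `|a 0 l| ^+ 2.
Proof.
rewrite mul_block_test deg_scaled_dotmx mulr_sumr.
under eq_bigr do rewrite sqr_norm_block_step mulr_suml.
rewrite exchange_big /=; apply: eq_bigr => l _.
rewrite -(vol_dangling e_sym e_irr (S_dangling l)) /vol natr_sum !mulr_suml.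
rewrite [RHS]big_mkcond /=; apply: eq_bigr => i _.
by case: (i \in S l); rewrite /= ?mul1r ?mul0r // mulrC.
Qed.

Lemma block_edge_term a l i j : i \in S l ->
  (e i j)%:R * ((block_step a i)^* - (block_step a j)^*) =
  ((i == out_src S_dangling l) && (j == out_dst l))%:R *
    ((a 0 l)^* - (block_step a (out_dst l))^*).
Proof.
move=> il; have [rl xl erl] := out_edgeP S_dangling l.
rewrite (block_step_in a il).
have [jl | jNl] := boolP (j \in S l).
  have jx : (j == out_dst l) = false by apply: contraNF xl => /eqP <-.
  by rewrite (block_step_in a jl) subrr mulr0 jx andbF mul0r.
have [eij | eNij] := boolP (e i j).
  by have [-> ->] := out_edge_uniq S_dangling il jNl eij; rewrite !eqxx.
case: andP => [[/eqP ir /eqP jx] | _]; last by rewrite !mul0r.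
by rewrite ir jx erl in eNij.
Qed.

Lemma block_laplacian_form a :
  ((a *m block_test) *m L *m (a *m block_test)^t*) 0 0 =
  \sum_l a 0 l * ((a 0 l)^* - (block_step a (out_dst l))^*).
Proof.
rewrite mul_block_test laplacian_form // sum_block_step; apply: eq_bigr => l _.
congr (_ * _); have [rl _ _] := out_edgeP S_dangling l.
under eq_bigr => i il do under eq_bigr do rewrite (block_edge_term a _ il).
rewrite (bigD1 (out_src S_dangling l) rl) /= [X in _ + X]big1 ?addr0; last first.
  by move=> i /andP [_ /negPf ->]; rewrite big1 // => j _; rewrite mul0r.
rewrite (bigD1 (out_dst l)) //= !eqxx mul1r big1 ?addr0 //.
by move=> j /negPf ->; rewrite mul0r.
Qed.

Lemma sum_sqr_norm_out_dst a :
  \sum_l `|block_step a (out_dst l)| ^+ 2 <= \sum_l `|a 0 l| ^+ 2.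
Proof.
under eq_bigr do rewrite sqr_norm_block_step.
rewrite exchange_big /=; apply: ler_sum => m _.
have [/existsP [l lm] | /existsPn noS] := boolP [exists l, out_dst l \in S m].
  rewrite (bigD1 l) //= lm mul1r big1 ?addr0 // => k kl.
  case: (boolP (out_dst k \in S m)) => [km|_]; last by rewrite mul0r.
  by rewrite (out_dst_inj e_sym S_disjoint km lm) eqxx in kl.
by rewrite big1 ?exprn_ge0 // => l _; rewrite (negPf (noS l)) mul0r.
Qed.

Lemma norm_out_dst_form a :
  `|\sum_l a 0 l * (block_step a (out_dst l))^*| <= \sum_l `|a 0 l| ^+ 2.
Proof.
have amgm l : `|a 0 l * (block_step a (out_dst l))^*| *+ 2 <=
    `|a 0 l| ^+ 2 + `|block_step a (out_dst l)| ^+ 2.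
  rewrite normrM norm_conjC.
  exact: (real_leif_mean_square_scaled (normr_real _) (normr_real _)).1.
rewrite -(@ler_pMn2r _ 2) //.
apply: (le_trans (_ : _ <= (\sum_l `|a 0 l * (block_step a (out_dst l))^*|) *+ 2)).
  by rewrite ler_pMn2r // ler_norm_sum.
rewrite -sumrMnl; apply: le_trans (ler_sum _ (fun l _ => amgm l)) _.
by rewrite big_split /= mulr2n lerD2l sum_sqr_norm_out_dst.
Qed.

Lemma block_rayleigh a : a != 0 ->
  ~ real_complex R (g.-1)%:R^-1 * ((a *m block_test) *m (a *m block_test)^t*) 0 0
    <= ((a *m block_test) *m L *m (a *m block_test)^t*) 0 0.
Proof.
move=> a0; rewrite block_dotmx block_laplacian_form.
have X_le := norm_out_dst_form a.
set X := \sum_l _ in X_le; set N := \sum_l _ in X_le *.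
have -> : \sum_l a 0 l * ((a 0 l)^* - (block_step a (out_dst l))^*) = N - X.
  by rewrite /N /X -sumrB; apply: eq_bigr => l _; rewrite mulrBr normCK.
have N_gt0 : 0 < N by rewrite /N -dotmx_sum -dotmxE dotmx_is_dotmx.
move=> H; have NX_ge0 : 0 <= N - X.
  by apply: le_trans H; rewrite !mulr_ge0 ?(ltW N_gt0) ?ler0c ?invr_ge0 ?ler0n.
have NX_le : N - X <= 2%:R * N.
  rewrite -(ger0_norm NX_ge0) mulr2n mulrDl mul1r (le_trans (ler_normB _ _)) //.
  by rewrite (gtr0_norm N_gt0) lerD2l.
have ratioN : 2%:R * N < real_complex R (g.-1)%:R^-1 * (((2 * g.-1).+1)%:R * N).
  rewrite mulrA -(rmorph_nat (real_complex R) (2 * g.-1).+1) -rmorphM ltr_pM2r //.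
  by rewrite -(rmorph_nat (real_complex R)) ltcR two_lt_dangling_ratio.
by have := lt_le_trans ratioN (le_trans H NX_le); rewrite ltxx.
Qed.

End DanglingRayleigh.

End LaplacianForm.

Theorem theorem3p5 (R : rcfType) (n : nat) (e : rel 'I_n) (g Q : nat)
    (S : 'I_Q -> {set 'I_n}) :
  simple_graph e -> no_isolated e -> (2 <= g)%N -> (1 <= Q)%N ->
  (forall l : 'I_Q, dangling e g (S l)) ->
  (forall l l' : 'I_Q, l != l' -> [disjoint S l & S l']) ->
  (4 * g ^ 2 <= vol e (~: \bigcup_(l < Q) S l))%N ->
  exists s : seq R,
    char_poly (norm_laplacian R e) = \prod_(x <- s) ('X - x%:P) /\
    (Q <= 2 * count (fun x : R => (x < (g.-1)%:R^-1)%R) s)%N.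
Proof.
move=> [e_sym e_irr] e_noiso g_ge2 _ S_dangling S_disjoint _.
set L := map_mx (real_complex R) (norm_laplacian R e).
have L_herm : L \is hermsymmx := laplacian_hermitian R e_sym.
set d := spectral_diag L; set lam : R := (g.-1)%:R^-1.
have lamC_real : real_complex R lam \is Num.real by apply/complex_realP; exists lam.
have Q_le := spectral_count_lt L_herm lamC_real
  (block_rayleigh e_sym e_irr e_noiso g_ge2 S_dangling S_disjoint).
exists [seq complex.Re (d 0 i) | i <- enum 'I_n]; split.
  by rewrite big_map big_enum real_hermitian_char_poly.
apply: (leq_trans Q_le); apply: leq_trans (leq_pmull _ (isT : 0 < 2)%N).
rewrite count_map count_enum_card; apply: subset_leq_card; apply/subsetP => i.
rewrite !inE -[d 0 i]RRe_real ?ltcR //.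
exact: (mxOverP (hermitian_spectral_diag_real L_herm)).
Qed.
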